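(* Let $X\colon\mathcal K\leftarrow\mathcal H$ and $Y\colon\mathcal H\leftarrow\mathcal G$ be groupoid correspondences, and let $U\subseteq X$ and $V\subseteq Y$ be slices. Then $U\cdot V=\{[x,y]:x\in U,y\in V,s(x)=r(y)\}\subseteq X\circ_{\mathcal H}Y$ is a slice of $X\circ_{\mathcal H}Y$, and for each $z\in U\cdot V$ the elements $x\in U$, $y\in V$ with $z=[x,y]$ are unique.
   Context: Groupoids are étale ($r,s$ local homeomorphisms, continuous multiplication and inversion) with Hausdorff locally compact object space. A groupoid correspondence $X\colon\mathcal H\leftarrow\mathcal G$: space with commuting continuous left $\mathcal H$-action (anchor $r$) and right $\mathcal G$-action (anchor $s$), $s$ a local homeomorphism, right action free and proper. $X\circ_{\mathcal H}Y$ is the orbit space of $X\times_{s,\mathcal H^0,r}Y$ under $h\cdot(x,y)=(xh^{-1},hy)$, elements $[x,y]$, a groupoid correspondence $\mathcal K\leftarrow\mathcal G$ with $k[x,y]=[kx,y]$, $[x,y]g=[x,yg]$, $s[x,y]=s(y)$. A slice of a correspondence $X\colon\mathcal H\leftarrow\mathcal G$ is an open subset on which both $s\colon X\to\mathcal G^0$ and the orbit projection $X\to X/\mathcal G$ are injective. *)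

From HB Require Import structures.
From mathcomp Require Import all_boot all_algebra all_classical topology.

Set Implicit Arguments.
Unset Strict Implicit.
Unset Printing Implicit Defensive.

Local Open Scope classical_set_scope.

Definition local_homeo (S T : topologicalType) (f : S -> T) : Prop :=
  continuous f /\
  forall x : S, exists U : set S,
    [/\ open U, U x,
        (forall a b, U a -> U b -> f a = f b -> a = b) &
        (forall W : set S, open W -> W `<=` U -> open (f @` W))].

(* Proper map in the sense of Bourbaki (no Hausdorffness assumed):
   continuous, closed, with quasi-compact fibres. *)
Definition proper_map (S T : topologicalType) (f : S -> T) : Prop :=
  [/\ continuous f,
      (forall C : set S, closed C -> closed (f @` C)) &
      (forall t : T, compact (f @^-1` [set t]))].

Record groupoid := Groupoid {
  gmor : topologicalType;
  gob  : topologicalType;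
  grg  : gmor -> gob;
  gsg  : gmor -> gob;
  gmul : gmor -> gmor -> gmor;         (* g*h, meaningful when s g = r h *)
  ginv : gmor -> gmor;
  gunit : gob -> gmor;
  grg_mul : forall g h, gsg g = grg h -> grg (gmul g h) = grg g;
  gsg_mul : forall g h, gsg g = grg h -> gsg (gmul g h) = gsg h;
  gmulA : forall g h k, gsg g = grg h -> gsg h = grg k ->
            gmul (gmul g h) k = gmul g (gmul h k);
  grg_unit : forall x, grg (gunit x) = x;
  gsg_unit : forall x, gsg (gunit x) = x;
  gmul1g : forall g, gmul (gunit (grg g)) g = g;
  gmulg1 : forall g, gmul g (gunit (gsg g)) = g;
  grg_inv : forall g, grg (ginv g) = gsg g;
  gsg_inv : forall g, gsg (ginv g) = grg g;
  gmulgV : forall g, gmul g (ginv g) = gunit (grg g);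
  gmulVg : forall g, gmul (ginv g) g = gunit (gsg g);
  gmul_cont : {within [set p : gmor * gmor | gsg p.1 = grg p.2],
                 continuous (fun p => gmul p.1 p.2)};
  ginv_cont : continuous ginv;
  gunit_cont : continuous gunit;
  grg_etale : local_homeo grg;
  gsg_etale : local_homeo gsg;
  gob_hausdorff : hausdorff_space gob;
  gob_lcompact : locally_compact [set: gob]
}.

Record corr (H G : groupoid) := Corr {
  csp : topologicalType;
  cr : csp -> gob H;
  cs : csp -> gob G;
  lact : gmor H -> csp -> csp;             (* h.x, when s h = r x *)
  ract : csp -> gmor G -> csp;             (* x.g, when s x = r g *)
  cr_lact : forall h x, gsg h = cr x -> cr (lact h x) = grg h;
  cs_lact : forall h x, gsg h = cr x -> cs (lact h x) = cs x;
  cr_ract : forall x g, cs x = grg g -> cr (ract x g) = cr x;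
  cs_ract : forall x g, cs x = grg g -> cs (ract x g) = gsg g;
  lact1 : forall x, lact (gunit (cr x)) x = x;
  ract1 : forall x, ract x (gunit (cs x)) = x;
  lactA : forall h1 h2 x, gsg h1 = grg h2 -> gsg h2 = cr x ->
            lact (gmul h1 h2) x = lact h1 (lact h2 x);
  ractA : forall x g1 g2, cs x = grg g1 -> gsg g1 = grg g2 ->
            ract x (gmul g1 g2) = ract (ract x g1) g2;
  lract_comm : forall h x g, gsg h = cr x -> cs x = grg g ->
            ract (lact h x) g = lact h (ract x g);
  cr_cont : continuous cr;
  lact_cont : {within [set p : gmor H * csp | gsg p.1 = cr p.2],
                 continuous (fun p => lact p.1 p.2)};
  ract_cont : {within [set p : csp * gmor G | cs p.1 = grg p.2],
                 continuous (fun p => ract p.1 p.2)};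
  cs_etale : local_homeo cs;
  ract_free : forall x g, cs x = grg g -> ract x g = x -> g = gunit (cs x);
  ract_proper :
    proper_map (fun p : set_type [set p : csp * gmor G | cs p.1 = grg p.2] =>
                  ((val p).1, ract (val p).1 (val p).2))
}.

Arguments cr {H G} _ _.
Arguments cs {H G} _ _.
Arguments lact {H G} _ _ _.
Arguments ract {H G} _ _ _.

(* A slice: open subset W on which s is injective and on which the orbit
   projection onto the space of right orbits is injective. Stated for any
   space with an anchor s and a right G-action act. *)
Definition is_slice (G : groupoid) (T : topologicalType) (s : T -> gob G)
    (act : T -> gmor G -> T) (W : set T) : Prop :=
  [/\ open W,
      (forall w w', W w -> W w' -> s w = s w' -> w = w') &
      (forall w w', W w -> W w' ->
         (exists g, s w = grg g /\ w' = act w g) -> w = w')].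

Definition corr_slice (H G : groupoid) (X : corr H G) (U : set (csp X)) :=
  is_slice (cs X) (ract X) U.

Section Composition.
Variables (K H G : groupoid) (X : corr K H) (Y : corr H G).

Definition fib : set (csp X * csp Y) := [set p | cs X p.1 = cr Y p.2].
Definition fibT : topologicalType := set_type fib.

Definition fib_rel (p q : fibT) : Prop :=
  exists h : gmor H, gsg h = cs X (val p).1 /\
    val q = (ract X (val p).1 (ginv h), lact Y h (val p).2).

Definition horbit (p : fibT) : set fibT := fib_rel p.

Definition horbits : set (set fibT) := [set A | exists p, A = horbit p].

Definition comp_space : Type := set_type horbits.

HB.instance Definition _ := Choice.on comp_space.


Definition comp_pi (p : fibT) : comp_space :=
  SigSub (mem_set (ex_intro (fun q => horbit p = horbit q) p erefl)).

Definition comp_open (W : set comp_space) : Prop := open (comp_pi @^-1` W).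

Program Definition comp_topology_mixin :=
  @isOpenTopological.Build comp_space comp_open _ _ _.
Next Obligation. by rewrite /comp_open preimage_setT; exact: openT. Qed.
Next Obligation. by move=> ? ? ? ?; exact: openI. Qed.
Next Obligation. by move=> I f ofi; apply: bigcup_open => i _; exact: ofi. Qed.
HB.instance Definition _ := comp_topology_mixin.

Definition comp_rep (z : comp_space) : fibT :=
  projT1 (cid (set_mem (valP z))).

Definition comp_s (z : comp_space) : gob G := cs Y (val (comp_rep z)).2.

Lemma ract_fib (p : fibT) (g : gmor G) :
  cs Y (val p).2 = grg g ->
  fib ((val p).1, ract Y (val p).2 g).
Proof.
move=> e; rewrite /fib /= cr_ract //; exact: (set_mem (valP p)).
Qed.

Definition comp_ract (z : comp_space) (g : gmor G) : comp_space :=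
  match pselect (cs Y (val (comp_rep z)).2 = grg g) with
  | left e => comp_pi (SigSub (mem_set (ract_fib e)))
  | right _ => z
  end.

Definition slice_prod (U : set (csp X)) (V : set (csp Y)) : set comp_space :=
  [set z | exists p : fibT, [/\ U (val p).1, V (val p).2 & z = comp_pi p]].

End Composition.

From HB Require Import structures.
From mathcomp Require Import all_boot all_algebra all_classical topology.
Local Open Scope classical_set_scope.

(** Two representatives [(x, y)], [(x', y')] of the same point of [U.V] with
[x, x'] in [U] and [y, y'] in [V] satisfy [x' = x h^-1], [y' = h y] for some
[h]; as [U] meets each [H]-orbit at most once, [x' = x], so [h] is a unit by
freeness of the right action and the representatives agree. Since
[s[x,y] = s(y)] and [s(x) = r(y)], injectivity of [s] on [U.V] comes from that
on [V] and then on [U]; if [[x', y'] = [x, y] g = [x, y g]], uniqueness gives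
[y' = y g], hence [y' = y] as [V] is a slice. Openness: if
[(x, y) ~ (x h^-1, h y)] lies in [U x V], take a local section [sigma] of
[s : H -> H^0] through [h]; for [(x', y')] near [(x, y)], the pair
[(x' k^-1, k y')] with [k = sigma (r y')] still lies in [U x V] by continuity
of the actions. *)

Set Implicit Arguments.

Section GroupoidAlgebra.
Variable H : groupoid.
Implicit Types (g h k : gmor H) (a : gob H).

Lemma ginv_unique g k : gsg g = grg k -> gmul g k = gunit (grg g) -> k = ginv g.
Proof.
move=> gk gkE; have sgV : gsg (ginv g) = grg g by rewrite gsg_inv.
by rewrite -[k]gmul1g -gk -gmulVg gmulA ?grg_inv // gkE -sgV gmulg1.
Qed.

Lemma ginvK g : ginv (ginv g) = g.
Proof. by symmetry; apply: ginv_unique; rewrite ?gsg_inv // gmulVg grg_inv. Qed.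

Lemma ginvM g h : gsg g = grg h -> ginv (gmul g h) = gmul (ginv h) (ginv g).
Proof.
move=> gh; symmetry; apply: ginv_unique.
  by rewrite gsg_mul // grg_mul ?grg_inv // gsg_inv.
rewrite grg_mul // gmulA ?gsg_mul ?grg_mul ?grg_inv ?gsg_inv //.
rewrite -[gmul h _]gmulA ?grg_inv ?gsg_inv // gmulgV.
by rewrite -gh -(grg_inv g) gmul1g gmulgV.
Qed.

Lemma ginv_unit a : ginv (gunit a) = gunit a.
Proof.
symmetry; apply: ginv_unique; first by rewrite gsg_unit grg_unit.
by rewrite -[in X in gmul _ X](gsg_unit a) gmulg1 grg_unit.
Qed.

Lemma ginv_eq_unit k a : ginv k = gunit a -> k = gunit a.
Proof. by move=> kV; rewrite -[k]ginvK kV ginv_unit. Qed.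

End GroupoidAlgebra.

Lemma near_ract {H G : groupoid} {X : corr H G} {T : topologicalType}
    {W : set (csp X)} {f : T -> csp X} {g : T -> gmor G} {t0 : T} :
  open W -> {for t0, continuous f} -> {for t0, continuous g} ->
  cs X (f t0) = grg (g t0) -> W (ract X (f t0) (g t0)) ->
  \forall t \near t0, cs X (f t) = grg (g t) -> W (ract X (f t) (g t)).
Proof.
move=> oW f_cont g_cont fg0 Wfg0.
have Wnear := @ract_cont _ _ X (f t0, g t0) _ (open_nbhs_nbhs (conj oW Wfg0)).
rewrite /= /nbhs /= -nbhs_subspace_in // in Wnear.
exact: (cvg_pair f_cont g_cont Wnear).
Qed.

Lemma near_lact {H G : groupoid} {X : corr H G} {T : topologicalType}
    {W : set (csp X)} {h : T -> gmor H} {f : T -> csp X} {t0 : T} :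
  open W -> {for t0, continuous h} -> {for t0, continuous f} ->
  gsg (h t0) = cr X (f t0) -> W (lact X (h t0) (f t0)) ->
  \forall t \near t0, gsg (h t) = cr X (f t) -> W (lact X (h t) (f t)).
Proof.
move=> oW h_cont f_cont hf0 Whf0.
have Wnear := @lact_cont _ _ X (h t0, f t0) _ (open_nbhs_nbhs (conj oW Whf0)).
rewrite /= /nbhs /= -nbhs_subspace_in // in Wnear.
exact: (cvg_pair h_cont f_cont Wnear).
Qed.

Lemma local_homeo_section (S T : topologicalType) (f : S -> T) (b : S) :
  local_homeo f -> exists sigma : T -> S,
    [/\ sigma (f b) = b, {for f b, continuous sigma} &
        \forall t \near f b, f (sigma t) = t].
Proof.
case=> _ /(_ b) [B [oB Bb injB openB]].
pose sigma t := if pselect ((f @` B) t) is left Bt then sval (cid2 Bt) else b.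
have sigmaP t : (f @` B) t -> B (sigma t) /\ f (sigma t) = t.
  by rewrite /sigma; case: pselect => // Bt _; case: (cid2 Bt).
have sigmaK c : B c -> sigma (f c) = c.
  move=> Bc; have [Bs fs] := sigmaP (f c) (ex_intro2 _ _ c Bc erefl).
  exact: injB.
have fB_nbhs W : open W -> W `<=` B -> W b -> nbhs (f b) (f @` W).
  by move=> oW WB Wb; apply: open_nbhs_nbhs; split; [exact: openB | exists b].
exists sigma; split; first exact: sigmaK.
- move=> N; rewrite /= sigmaK // nbhsE => -[O [oO Ob] ON].
  apply: filterS (fB_nbhs _ (openI oO oB) (@subIsetr _ _ _) (conj Ob Bb)).
  by move=> _ [c [Oc Bc] <-]; rewrite /= sigmaK //; exact: ON.
- by apply: filterS (fB_nbhs _ oB (@subset_refl _ _) Bb) => t /sigmaP [].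
Qed.

Section Composition.
Variables (K H G : groupoid) (X : corr K H) (Y : corr H G).
Implicit Types p q : fibT X Y.

Lemma fibP p : cs X (val p).1 = cr Y (val p).2.
Proof. exact: set_mem (valP p). Qed.

Lemma fib_eq {p q} : (val p).1 = (val q).1 -> (val p).2 = (val q).2 -> p = q.
Proof.
move=> pq1 pq2; apply: val_inj.
by rewrite [LHS]surjective_pairing pq1 pq2 -surjective_pairing.
Qed.

Lemma fib_rel_refl p : fib_rel p p.
Proof.
exists (gunit (cs X (val p).1)); split; first by rewrite gsg_unit.
by rewrite ginv_unit ract1 fibP lact1 -surjective_pairing.
Qed.

Lemma fib_rel_sym p q : fib_rel p q -> fib_rel q p.
Proof.
case=> h [sh qE]; exists (ginv h); rewrite qE /=; split.
  by rewrite gsg_inv cs_ract ?grg_inv ?gsg_inv ?sh.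
rewrite ginvK -ractA ?grg_inv ?gsg_inv // gmulVg sh ract1.
rewrite -lactA ?grg_inv ?gsg_inv -?fibP // gmulVg sh fibP lact1.
exact: surjective_pairing.
Qed.

Lemma fib_rel_trans p q r : fib_rel p q -> fib_rel q r -> fib_rel p r.
Proof.
case=> h [sh qE] [k [sk rE]]; rewrite qE /= in sk.
have kh : gsg k = grg h by rewrite sk cs_ract ?gsg_inv // grg_inv sh.
exists (gmul k h); split; first by rewrite gsg_mul.
by rewrite rE qE /= ginvM // -ractA ?grg_inv ?gsg_inv // lactA // sh fibP.
Qed.

Lemma comp_pi_eqP p q : comp_pi p = comp_pi q <-> fib_rel p q.
Proof.
split=> [/(congr1 val) /= pq | pq].
  by have : horbit q q := fib_rel_refl q; rewrite -pq.
apply: val_inj; apply/seteqP; split=> r /=.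
  by move=> pr; apply: fib_rel_trans (fib_rel_sym pq) pr.
by move=> qr; apply: fib_rel_trans pq qr.
Qed.

Lemma fib_rel_rep p : fib_rel p (comp_rep (comp_pi p)).
Proof.
have : horbit (comp_rep (comp_pi p)) (comp_rep (comp_pi p)) := fib_rel_refl _.
by rewrite /comp_rep; case: cid => q /= <-.
Qed.

Lemma comp_s_pi p : comp_s (comp_pi p) = cs Y (val p).2.
Proof.
rewrite /comp_s; have [h [sh ->]] := fib_rel_rep p.
by rewrite /= cs_lact // sh fibP.
Qed.

Lemma comp_ract_pi {p g} (sg : cs Y (val p).2 = grg g) :
  comp_ract (comp_pi p) g = comp_pi (SigSub (mem_set (ract_fib sg))).
Proof.
rewrite /comp_ract; case: pselect => [sg'|]; last first.
  by have := comp_s_pi p; rewrite /comp_s => -> /(_ sg).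
apply/comp_pi_eqP/fib_rel_sym; have [h [sh rE]] := fib_rel_rep p.
exists h; split => //=; rewrite /= in rE.
by rewrite rE /= lract_comm // sh fibP.
Qed.

Lemma fib_rel_slice_eq (U : set (csp X)) p q : corr_slice U ->
  fib_rel p q -> U (val p).1 -> U (val q).1 -> p = q.
Proof.
case=> _ _ orbitU [h [sh qE]] Up Uq.
have pq1 : (val p).1 = (val q).1.
  by apply: orbitU => //; exists (ginv h); rewrite grg_inv sh qE.
have h1 : h = gunit (cs X (val p).1).
  apply: ginv_eq_unit; apply: ract_free; first by rewrite grg_inv sh.
  by rewrite {2}pq1 qE.
by apply: fib_eq => //; rewrite qE /= h1 fibP lact1.
Qed.

Lemma slice_prod_pi {U : set (csp X)} {V : set (csp Y)} {p k} :
  gsg k = cr Y (val p).2 ->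
  U (ract X (val p).1 (ginv k)) -> V (lact Y k (val p).2) ->
  slice_prod U V (comp_pi p).
Proof.
move=> sk Uk Vk.
have fk : fib (ract X (val p).1 (ginv k), lact Y k (val p).2).
  by rewrite /fib /= cs_ract ?grg_inv ?sk ?fibP // cr_lact ?gsg_inv.
exists (SigSub (mem_set fk)); split => //.
by apply/comp_pi_eqP; exists k; rewrite sk fibP.
Qed.

Lemma continuous_fib1 : continuous (fun p : fibT X Y => (val p).1).
Proof.
move=> p; apply: continuous_comp (@initial_continuous _ _ _ p) _.
exact: cvg_fst.
Qed.

Lemma continuous_fib2 : continuous (fun p : fibT X Y => (val p).2).
Proof.
move=> p; apply: continuous_comp (@initial_continuous _ _ _ p) _.
exact: cvg_snd.
Qed.

Lemma open_slice_prod (U : set (csp X)) (V : set (csp Y)) :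
  open U -> open V -> open (slice_prod U V).
Proof.
move=> oU oV; rewrite /open /= /comp_open openE => p0 [q [Uq Vq]].
move=> /comp_pi_eqP [h [sh qE]]; rewrite qE /= in Uq Vq.
have [sigma [sigma_h sigma_cont sigmaK]] := local_homeo_section h (gsg_etale H).
pose k p := sigma (cr Y (val p).2).
have r2_cont : {for p0, continuous (fun p : fibT X Y => cr Y (val p).2)}.
  apply: (@continuous_comp _ _ _ (fun p : fibT X Y => (val p).2) (cr Y)).
    exact: continuous_fib2.
  exact: cr_cont.
have kp0 : k p0 = h by rewrite /k -fibP -sh sigma_h.
have k_cont : {for p0, continuous k}.
  by apply: (@continuous_comp _ _ _ _ sigma _ r2_cont); rewrite -fibP -sh.
have near_sk : \forall p \near p0, gsg (k p) = cr Y (val p).2.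
  by move: sigmaK; rewrite sh fibP => /r2_cont.
have near_U : \forall p \near p0,
    cs X (val p).1 = grg (ginv (k p)) -> U (ract X (val p).1 (ginv (k p))).
  apply: (near_ract oU (continuous_fib1 p0)
            (continuous_comp k_cont (@ginv_cont H _)));
    by rewrite /= kp0 ?grg_inv.
have near_V : \forall p \near p0,
    gsg (k p) = cr Y (val p).2 -> V (lact Y (k p) (val p).2).
  by apply: (near_lact oV k_cont (continuous_fib2 p0)); rewrite kp0 // sh fibP.
near=> p.
have skp : gsg (k p) = cr Y (val p).2 by near: p.
apply: (slice_prod_pi skp).
- by apply: (near near_U p) => //; rewrite grg_inv skp fibP.
- exact: (near near_V p).
Unshelve. all: by end_near.
Qed.

Section SliceProduct.
Variables (U : set (csp X)) (V : set (csp Y)).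
Hypotheses (sU : corr_slice U) (sV : corr_slice V).

Lemma slice_prod_s_inj w w' : slice_prod U V w -> slice_prod U V w' ->
  comp_s w = comp_s w' -> w = w'.
Proof.
case: sU sV => _ injU _ [_ injV _] [p [Up Vp ->]] [p' [Up' Vp' ->]].
rewrite !comp_s_pi => sp; have pp2 := injV _ _ Vp Vp' sp.
have pp1 : (val p).1 = (val p').1 by apply: injU => //; rewrite !fibP pp2.
by congr comp_pi; apply: fib_eq.
Qed.

Lemma slice_prod_orbit_inj w w' : slice_prod U V w -> slice_prod U V w' ->
  (exists g, comp_s w = grg g /\ w' = comp_ract w g) -> w = w'.
Proof.
case: sV => _ _ orbitV [p [Up Vp ->]] [p' [Up' Vp' ->]] [g [+ p'E]].
rewrite comp_s_pi => sg; move: p'E.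
rewrite (comp_ract_pi sg) => /esym /comp_pi_eqP pg.
have p'E := fib_rel_slice_eq sU pg Up Up'.
have pp1 : (val p).1 = (val p').1 by rewrite -p'E.
have pp2 : (val p).2 = (val p').2.
  by apply: orbitV => //; exists g; rewrite -p'E.
by congr comp_pi; apply: fib_eq.
Qed.

Lemma is_slice_prod :
  is_slice (@comp_s K H G X Y) (@comp_ract K H G X Y) (slice_prod U V).
Proof.
split; [|exact: slice_prod_s_inj|exact: slice_prod_orbit_inj].
by case: sU sV => oU _ _ [oV _ _]; exact: open_slice_prod.
Qed.

End SliceProduct.

End Composition.

Unset Implicit Arguments.

Theorem lemma7p11 (K H G : groupoid) (X : corr K H) (Y : corr H G)
    (U : set (csp X)) (V : set (csp Y)) :
  corr_slice U -> corr_slice V ->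
  is_slice (@comp_s K H G X Y) (@comp_ract K H G X Y) (slice_prod U V) /\
  (forall z, slice_prod U V z ->
     forall p q : fibT X Y,
       U (val p).1 -> V (val p).2 -> U (val q).1 -> V (val q).2 ->
       z = comp_pi p -> z = comp_pi q ->
       (val p).1 = (val q).1 /\ (val p).2 = (val q).2).
Proof.
move=> sU sV; split; first exact: is_slice_prod.
move=> _ _ p q Up _ Uq _ -> /comp_pi_eqP pq.
by rewrite (fib_rel_slice_eq sU pq Up Uq).
Qed.
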